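(* Let $q$ be a Boolean conjunctive query without self-join, let $F\in q$ with $\mathit{key}(F)=\emptyset$, and let $q'=q\setminus\{F\}$. Let $\vec{y}$ be a sequence of distinct variables with $\{\text{variables of }\vec{y}\}=\mathit{vars}(F)$. Let ${\mathbf{db}}$ be an uncertain database that is purified relative to $q$, and let $D$ be the active domain of ${\mathbf{db}}$. Then ${\mathbf{db}}\in\mathsf{CERTAINTY}(q)$ if and only if ${\mathbf{db}}\neq\emptyset$ and for all $\vec{b}\in D^{|\vec{y}|}$, if $F[\vec{y}\mapsto\vec{b}]\in{\mathbf{db}}$ then ${\mathbf{db}}\in\mathsf{CERTAINTY}(q'[\vec{y}\mapsto\vec{b}])$.
   Context: Relation names have signatures $[n,k]$ ($n\ge k\ge1$; arity $n$, primary key positions $1,\dots,k$). Atoms have variables or constants as arguments; a fact is an atom with only constants; facts are key-equal if they have the same relation name and agree on the primary key. $\mathit{key}(F)$ is the set of variables in the primary-key positions of atom $F$, $\mathit{vars}(F)$ its set of variables. An uncertain database is a finite set of facts; its active domain is the set of constants occurring in it; a repair is a maximal subset with no two distinct key-equal facts. A Boolean conjunctive query $q$ is a finite set of atoms (existentially closed conjunction) with variable set $\mathit{vars}(q)$; it has a self-join if a relation name occurs in two of its atoms. $\mathsf{CERTAINTY}(q)$ is the set of uncertain databases all of whose repairs satisfy $q$. For a sequence $\vec{y}=\langle y_1,\dots,y_\ell\rangle$ of distinct variables and constants $\vec{b}=\langle b_1,\dots,b_\ell\rangle$, $X[\vec{y}\mapsto\vec{b}]$ replaces each occurrence of $y_i$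 in $X$ by $b_i$. ${\mathbf{db}}$ is purified relative to $q$ if every fact $A\in{\mathbf{db}}$ satisfies $A\in\theta(q)\subseteq{\mathbf{db}}$ for some valuation $\theta$ over $\mathit{vars}(q)$. *)

From mathcomp Require Import all_boot.
Set Implicit Arguments. Unset Strict Implicit. Unset Printing Implicit Defensive.

Definition term := (nat + nat)%type.
Definition Var (x : nat) : term := inl x.
Definition Cst (c : nat) : term := inr c.

(* A relation name: (identifier, arity n, key length k); signature [n,k]. *)
Definition relname := (nat * nat * nat)%type.
Definition rel_arity (R : relname) : nat := R.1.2.
Definition rel_keylen (R : relname) : nat := R.2.
Definition wf_rel (R : relname) : bool :=
  (1 <= rel_keylen R) && (rel_keylen R <= rel_arity R).

Definition atom := (relname * seq term)%type.
Definition arel (A : atom) : relname := A.1.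
Definition aargs (A : atom) : seq term := A.2.
Definition wf_atom (A : atom) : bool :=
  wf_rel (arel A) && (size (aargs A) == rel_arity (arel A)).

Definition term_vars (t : term) : seq nat :=
  match t with inl x => [:: x] | inr _ => [::] end.
Definition is_const (t : term) : bool :=
  match t with inl _ => false | inr _ => true end.

Definition atom_vars (A : atom) : seq nat := flatten (map term_vars (aargs A)).
Definition key_vars (A : atom) : seq nat :=
  flatten (map term_vars (take (rel_keylen (arel A)) (aargs A))).

Definition is_fact (A : atom) : bool := all is_const (aargs A).

Definition key_equal (A B : atom) : bool :=
  (arel A == arel B) &&
  (take (rel_keylen (arel A)) (aargs A) == take (rel_keylen (arel B)) (aargs B)).

Definition database := seq atom.
Definition wf_db (db : database) : bool := all (fun A => is_fact A && wf_atom A) db.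

Definition active_domain (db : database) : seq nat :=
  flatten (map (fun A => flatten (map (fun t => match t with inr c => [:: c] | inl _ => [::] end)
                                      (aargs A))) db).

Definition consistent (r : database) : Prop :=
  forall A B, A \in r -> B \in r -> key_equal A B -> A = B.

Definition repair (db r : database) : Prop :=
  {subset r <= db} /\ consistent r /\
  (forall r' : database, {subset r <= r'} -> {subset r' <= db} -> consistent r' ->
     {subset r' <= r}).

Definition query := seq atom.
Definition wf_query (q : query) : bool := all wf_atom q.
Definition self_join_free (q : query) : Prop :=
  forall A B, A \in q -> B \in q -> arel A = arel B -> A = B.

Definition apply_val_term (theta : nat -> nat) (t : term) : term :=
  match t with inl x => inr (theta x) | inr c => inr c end.
Definition apply_val (theta : nat -> nat) (A : atom) : atom :=
  (arel A, map (apply_val_term theta) (aargs A)).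

Definition satisfies (db : database) (q : query) : Prop :=
  exists theta : nat -> nat, {subset map (apply_val theta) q <= db}.

Definition certain (q : query) (db : database) : Prop :=
  forall r, repair db r -> satisfies r q.

Definition purified (q : query) (db : database) : Prop :=
  forall A, A \in db -> exists theta : nat -> nat,
    A \in map (apply_val theta) q /\ {subset map (apply_val theta) q <= db}.

Definition subst_term (y b : seq nat) (t : term) : term :=
  match t with
  | inl x => if x \in y then inr (nth 0 b (index x y)) else inl x
  | inr c => inr c
  end.
Definition subst_atom (y b : seq nat) (A : atom) : atom :=
  (arel A, map (subst_term y b) (aargs A)).
Definition subst_query (y b : seq nat) (q : query) : query :=
  map (subst_atom y b) q.

Definition remove_atom (q : query) (F : atom) : query := filter (fun G => G != F) q.

From mathcomp Require Import all_boot.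
Set Implicit Arguments. Unset Strict Implicit. Unset Printing Implicit Defensive.

(* Because key(F) is empty, all F-facts of db are key-equal: a repair keeps
   exactly one of them, and every valuation satisfying q in that repair maps F
   onto it.  Given an F-fact F[y->b] of db, swap it into an arbitrary repair r;
   the atoms of q other than F use other relation names, so the rest of a
   satisfying valuation lands in the part of the new repair shared with r,
   which proves the certainty of q'[y->b].  Conversely, purification makes
   every fact of a repair an instance of q; the F-fact of the repair is some
   F[y->b] with b in the active domain, and gluing y->b with a valuation
   witnessing q'[y->b] satisfies q. *)

Lemma key_equal_refl A : key_equal A A.
Proof. by rewrite /key_equal !eqxx. Qed.

Lemma key_equal_sym A B : key_equal A B = key_equal B A.
Proof. by rewrite /key_equal eq_sym [X in _ && X]eq_sym. Qed.

Lemma key_equal_trans A B C : key_equal A B -> key_equal B C -> key_equal A C.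
Proof.
rewrite /key_equal => /andP[/eqP e1 /eqP e2] /andP[/eqP e3 /eqP e4].
by rewrite e2 e4 e1 e3 !eqxx.
Qed.

Lemma consistent_sub (r s : database) :
  {subset s <= r} -> consistent r -> consistent s.
Proof. by move=> sr Hr A B /sr HA /sr HB; apply: Hr. Qed.

Lemma consistent_cons (A : atom) (s : database) :
  ~~ has (key_equal A) s -> consistent s -> consistent (A :: s).
Proof.
move=> /hasPn Hn Hs X Y; rewrite !inE => /orP[/eqP->|HX] /orP[/eqP->|HY] // Hk.
- by move: (Hn _ HY); rewrite Hk.
- by move: (Hn _ HX); rewrite key_equal_sym Hk.
- exact: Hs.
Qed.

Fixpoint greedy_extend (s l : database) : database :=
  if l is A :: l' then
    greedy_extend (if has (key_equal A) s then s else A :: s) l'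
  else s.

Lemma greedy_extend_sup l s : {subset s <= greedy_extend s l}.
Proof.
elim: l s => [|A l IH] s x Hx //=.
by apply: IH; case: ifP => _ //; rewrite inE Hx orbT.
Qed.

Lemma greedy_extend_sub l s : {subset greedy_extend s l <= s ++ l}.
Proof.
elim: l s => [|A l IH] s x /= Hx; first by rewrite cats0.
move: (IH _ _ Hx); rewrite !mem_cat inE; case: ifP => _.
  by case/orP => ->; rewrite ?orbT.
by rewrite inE; case/orP => [/orP[]|] ->; rewrite ?orbT.
Qed.

Lemma consistent_greedy_extend l s :
  consistent s -> consistent (greedy_extend s l).
Proof.
elim: l s => [|A l IH] s Hs //=; apply: IH.
by case: ifP => // /negbT nA; apply: consistent_cons.
Qed.

Lemma greedy_extend_key_equal l s A :
  A \in l -> has (key_equal A) (greedy_extend s l).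
Proof.
elim: l s => [|C l IH] s //; rewrite inE => /orP[/eqP->|HA] /=; last exact: IH.
case: ifP => [/hasP[B HB Hk]|_]; apply/hasP.
  by exists B => //; apply: greedy_extend_sup.
by exists C; [apply: greedy_extend_sup; rewrite inE eqxx | apply: key_equal_refl].
Qed.

Section Repairs.

Variable db : database.

Lemma repair_greedy_extend (s : database) :
  {subset s <= db} -> consistent s -> repair db (greedy_extend s db).
Proof.
move=> sub_s_db cons_s; split; [|split; first exact: consistent_greedy_extend].
  by move=> x /greedy_extend_sub; rewrite mem_cat => /orP[/sub_s_db|].
move=> r' sub1 sub2 cons_r' A HA.
have /hasP[B HB Hk] := greedy_extend_key_equal s (sub2 _ HA).
by rewrite (cons_r' _ _ HA (sub1 _ HB) Hk).
Qed.

Lemma repair_has_key_equal (r : database) (A : atom) :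
  repair db r -> A \in db -> has (key_equal A) r.
Proof.
move=> [sub_r [cons_r max_r]] HA; apply/negPn/negP => Hn.
have HAr : A \in r.
  apply: (max_r (A :: r)); last exact: mem_head.
  - by move=> z Hz; rewrite inE Hz orbT.
  - by move=> z; rewrite inE => /orP[/eqP->|/sub_r].
  - exact: consistent_cons.
by move/hasPn/(_ _ HAr): Hn; rewrite key_equal_refl.
Qed.

Lemma repair_swap (r : database) (A : atom) :
  repair db r -> A \in db ->
  exists r', [/\ repair db r', A \in r' &
                 forall B, B \in r' -> ~~ key_equal B A -> B \in r].
Proof.
move=> Hr HA; have [sub_r [cons_r _]] := Hr.
set s := A :: [seq B <- r | ~~ key_equal B A].
have sub_s_db : {subset s <= db}.
  by move=> x; rewrite inE mem_filter => /orP[/eqP->|/andP[_ /sub_r]].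
have cons_s : consistent s.
  apply: consistent_cons.
    by apply/hasPn => B; rewrite mem_filter key_equal_sym => /andP[].
  by apply: consistent_sub cons_r => x; rewrite mem_filter => /andP[].
have Hr' := repair_greedy_extend sub_s_db cons_s.
have sub_s_r' := @greedy_extend_sup db s.
exists (greedy_extend s db); split => // [|B HB nkB]; first by apply: sub_s_r'; rewrite inE eqxx.
have [sub_r' [cons_r' _]] := Hr'.
have /hasP[C HC kBC] := repair_has_key_equal Hr (sub_r' _ HB).
have nkC : ~~ key_equal C A.
  by apply: contra nkB; apply: key_equal_trans.
suff -> : B = C by [].
by apply: cons_r' => //; apply: sub_s_r'; rewrite inE mem_filter nkC HC orbT.
Qed.

End Repairs.

Lemma not_certain_nil (q : query) (A : atom) : A \in q -> ~ certain q [::].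
Proof.
move=> HA Hcert.
have [|theta Hs] := Hcert [::]; first by split; [|split] => // r' _ H _ x /H.
by have := Hs _ (map_f (apply_val theta) HA).
Qed.

Lemma mem_atom_vars A x : (x \in atom_vars A) = (inl x \in aargs A).
Proof.
rewrite /atom_vars; elim: (aargs A) => [|t s IH] //=.
by rewrite mem_cat IH inE; case: t => [z|c] //=; rewrite inE.
Qed.

Definition override_val (y b : seq nat) (theta : nat -> nat) (x : nat) : nat :=
  if x \in y then nth 0 b (index x y) else theta x.

Lemma apply_override_val y b theta A :
  apply_val (override_val y b theta) A = apply_val theta (subst_atom y b A).
Proof.
rewrite /apply_val /subst_atom /= -map_comp; congr pair.
by apply: eq_map => [[x|c]] //=; rewrite /override_val; case: ifP.
Qed.

Lemma apply_val_subst_atom y b theta A :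
  {in y, forall x, theta x = nth 0 b (index x y)} ->
  apply_val theta (subst_atom y b A) = apply_val theta A.
Proof.
move=> agree; rewrite /apply_val /subst_atom /= -map_comp; congr pair.
by apply: eq_map => [[x|c]] //=; case: ifP => // /agree ->.
Qed.

Lemma subst_atom_apply_val y b theta A :
  {subset atom_vars A <= y} -> {in y, forall x, theta x = nth 0 b (index x y)} ->
  subst_atom y b A = apply_val theta A.
Proof.
move=> vars_y agree; rewrite /subst_atom /apply_val; congr pair.
apply/eq_in_map => [[x|c]] //=; rewrite -mem_atom_vars => /vars_y xy.
by rewrite xy agree.
Qed.

Lemma apply_val_eq_subst_atom y b theta A :
  {subset y <= atom_vars A} -> apply_val theta A = subst_atom y b A ->
  {in y, forall x, theta x = nth 0 b (index x y)}.
Proof.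
rewrite /apply_val /subst_atom => y_vars [/eq_in_map E] x xy.
have := E (inl x); rewrite -mem_atom_vars /= xy => /(_ (y_vars _ xy)).
by case.
Qed.

Lemma map_ground_id (f : term -> term) (ts : seq term) :
  (forall c, f (inr c) = inr c) -> flatten (map term_vars ts) = [::] ->
  map f ts = ts.
Proof. by move=> fc; elim: ts => [|[x|c] ts IH] //= H; rewrite fc IH. Qed.

Lemma key_equal_ground_key F theta y b :
  key_vars F = [::] -> key_equal (apply_val theta F) (subst_atom y b F).
Proof.
rewrite /key_vars /key_equal /apply_val /subst_atom /= => ground.
by rewrite -!map_take !map_ground_id ?eqxx.
Qed.

Lemma apply_val_active_domain theta A db x :
  apply_val theta A \in db -> x \in atom_vars A -> theta x \in active_domain db.
Proof.
rewrite mem_atom_vars => HA Hx; apply/flattenP.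
eexists; first exact: map_f HA.
apply/flattenP; exists [:: theta x]; last by rewrite inE.
exact: map_f (map_f (apply_val_term theta) Hx).
Qed.

Section CertaintyByKeylessAtom.

Variables (q : query) (F : atom) (y : seq nat) (db : database).
Hypothesis q_sjf : self_join_free q.
Hypothesis F_in_q : F \in q.
Hypothesis keyF : key_vars F = [::].
Hypothesis y_vars : forall x, (x \in y) = (x \in atom_vars F).

Let y_sub_vars : {subset y <= atom_vars F}.
Proof. by move=> x; rewrite y_vars. Qed.

Let vars_sub_y : {subset atom_vars F <= y}.
Proof. by move=> x; rewrite y_vars. Qed.

Lemma certain_subst_remove_atom (b : seq nat) :
  certain q db -> subst_atom y b F \in db ->
  certain (subst_query y b (remove_atom q F)) db.
Proof.
move=> Hcert HFb r Hr.
have [r' [Hr' HFb_r' r'_r]] := repair_swap Hr HFb.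
have [_ [cons_r' _]] := Hr'.
have [theta Htheta] := Hcert _ Hr'.
have thetaF : apply_val theta F = subst_atom y b F.
  by apply: cons_r' => //; [exact: Htheta (map_f _ F_in_q) | exact: key_equal_ground_key].
have agree := apply_val_eq_subst_atom y_sub_vars thetaF.
exists theta => _ /mapP[_ /mapP[G HG ->] ->].
move: HG; rewrite mem_filter => /andP[GF HG].
rewrite apply_val_subst_atom //; apply: r'_r; first exact: Htheta (map_f _ HG).
apply: contra GF => /andP[/eqP relG _].
by rewrite (q_sjf HG F_in_q relG).
Qed.

Hypothesis db_pure : purified q db.

Lemma certain_of_certain_subst :
  db != [::] ->
  (forall b : seq nat, size b = size y -> all (fun c => c \in active_domain db) b ->
     subst_atom y b F \in db -> certain (subst_query y b (remove_atom q F)) db) ->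
  certain q db.
Proof.
move=> db_ne Hsub r Hr; have [sub_r _] := Hr.
have [A0 HA0] : exists A0, A0 \in db.
  by case: db db_ne => [|A0 ?] // _; exists A0; apply: mem_head.
have [theta [_ Htheta]] := db_pure HA0.
have /hasP[C HC kFC] := repair_has_key_equal Hr (Htheta _ (map_f _ F_in_q)).
have [theta2 [/mapP[G HG EC] _]] := db_pure (sub_r _ HC).
have {HG} EG : G = F.
  by apply: q_sjf => //; move: kFC; rewrite /key_equal EC => /andP[/eqP].
subst G; set b := map theta2 y.
have agree2 : {in y, forall x, theta2 x = nth 0 b (index x y)}.
  by move=> x xy; rewrite (nth_map 0) ?index_mem // nth_index.
have EFb : subst_atom y b F = C.
  by rewrite EC; apply: subst_atom_apply_val.
have b_dom : all (fun c => c \in active_domain db) b.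
  apply/allP => _ /mapP[x xy ->]; apply: (apply_val_active_domain (A := F)).
    by rewrite -EC; apply: sub_r.
  exact: y_sub_vars.
have HFb : subst_atom y b F \in db by rewrite EFb; apply: sub_r.
have [theta3 Htheta3] := Hsub b (size_map _ _) b_dom HFb r Hr.
exists (override_val y b theta3) => _ /mapP[G HG ->].
case: (eqVneq G F) => [->|GF].
  have agree3 : {in y, forall x, override_val y b theta3 x = nth 0 b (index x y)}.
    by move=> x xy; rewrite /override_val xy.
  by rewrite -(subst_atom_apply_val vars_sub_y agree3) EFb.
by rewrite apply_override_val; apply/Htheta3/map_f/map_f; rewrite mem_filter GF.
Qed.

End CertaintyByKeylessAtom.

Theorem lemma8 (q : query) (F : atom) (y : seq nat) (db : database) :
  wf_query q -> self_join_free q -> F \in q -> key_vars F = [::] ->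
  uniq y -> (forall x, (x \in y) = (x \in atom_vars F)) ->
  wf_db db -> purified q db ->
  (certain q db <->
   (db != [::] /\
    forall b : seq nat, size b = size y -> all (fun c => c \in active_domain db) b ->
      subst_atom y b F \in db ->
      certain (subst_query y b (remove_atom q F)) db)).
Proof.
move=> _ q_sjf F_in_q keyF _ y_vars _ db_pure; split.
- move=> Hcert; split.
    by apply/eqP => db0; subst db; exact: not_certain_nil F_in_q Hcert.
  by move=> b _ _; apply: certain_subst_remove_atom.
- case=> db_ne Hsub.
  exact: certain_of_certain_subst q_sjf F_in_q y_vars db_pure db_ne Hsub.
Qed.
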